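(* Let $\varphi$ be a quantifier-free formula in the SMT theory of floating-point numbers and $\mathit{cost}$ a floating-point variable occurring in $\varphi$, of sort with $e$ exponent bits and $s$ significand bits (including the hidden bit), so that $\mathit{cost}$ is a vector of $n=e+s$ bits. Let $\varphi_{\mathrm{noNaN}}:=\varphi\wedge\neg\mathrm{isNaN}(\mathit{cost})$ be satisfiable, and consider the minimization (resp. maximization) of $\mathit{cost}$ subject to $\varphi_{\mathrm{noNaN}}$. Let $k\in[0..n-1]$, let $\tau_k$ be an assignment to $\mathit{cost}[0],\dots,\mathit{cost}[k-1]$, and let $d$ be the dynamic attractor for $\mathit{cost}$ with respect to $\tau_k$. Let $\tau_{k+1}:=\tau_k\cup\{\mathit{cost}[k]:=d[k]\}$ and $\tau'_{k+1}:=\tau_k\cup\{\mathit{cost}[k]:=\overline{d[k]}\}$, and let $\mathcal{M},\mathcal{M}'$ be models of $\varphi_{\mathrm{noNaN}}$ extending $\tau_{k+1}$ and $\tau'_{k+1}$ respectively. Then $\mathcal{M}(\mathit{cost})\le\mathcal{M}'(\mathit{cost})$ (resp. $\mathcal{M}(\mathit{cost})\ge\mathcal{M}'(\mathit{cost})$).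
   Context: Bits are indexed from the most significant bit $\mathit{cost}[0]$ to the least significant $\mathit{cost}[n-1]$; $\mathit{cost}[0]$ is the sign bit $\sigma$, $\mathit{cost}[1..e]$ is the exponent $E$ (read as an unsigned integer) and $\mathit{cost}[e+1..n-1]$ is the stored significand $m$ of $s-1$ bits. With bias $b=2^{e-1}-1$, IEEE 754-2008 semantics: if $E$ is all ones and $m=0$ the value is $+\infty$ or $-\infty$ according to $\sigma$; if $E$ is all ones and $m\ne0$ the value is NaN; if $E=0$ the value is the subnormal $(-1)^\sigma 2^{1-b}(0.m)_2$; otherwise it is the normal $(-1)^\sigma 2^{E-b}(1.m)_2$. The order $\le$ is the usual total order on non-NaN floating-point values (real order extended by $\pm\infty$, with $+0$ and $-0$ equal). The dynamic attractor for $\mathit{cost}$ with respect to an assignment $\tau_k$ to its $k$ most significant bits is the smallest (resp., when maximizing, largest) floating-point value different from NaN whose $k$ most significant bits coincide with those assigned by $\tau_k$; $d[k]$ denotes its $k$-th bit and $\overline{d[k]}$ the complement bit. *)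

From mathcomp Require Import all_boot all_order all_algebra.

Import Order.TTheory GRing.Theory Num.Theory.
Local Open Scope ring_scope.

Definition bits_to_nat (x : seq bool) : nat :=
  foldl (fun acc (b : bool) => (acc.*2 + b)%N) 0%N x.

(* floating-point values: finite rationals (both zeros are 0), signed infinities, NaN.
   FPinf true = -oo, FPinf false = +oo *)
Inductive fpval := FPfin of rat | FPinf of bool | FPnan.

(* Decoding of a bit vector x = cost[0..n-1], n = e + s:
   x[0] sign, x[1..e] exponent E, x[e+1..n-1] stored significand m (s-1 bits). *)
Definition fp_value (e s : nat) (x : seq bool) : fpval :=
  let sg := nth false x 0 in
  let E := bits_to_nat (take e (drop 1 x)) in
  let m := bits_to_nat (drop e.+1 x) in
  let b : int := (2 ^ e.-1)%:Z - 1 in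
  let sgn : rat := (-1) ^+ sg in
  let frac : rat := m%:R / (2 ^ s.-1)%:R in
  if E == (2 ^ e).-1 then (if m == 0%N then FPinf sg else FPnan)
  else if E == 0%N then FPfin (sgn * ((2%:R : rat) ^ (1 - b)) * frac)
  else FPfin (sgn * ((2%:R : rat) ^ (E%:Z - b)) * (1 + frac)).

Definition is_nan (v : fpval) : bool := if v is FPnan then true else false.

Definition fp_le (u v : fpval) : bool :=
  match u, v with
  | FPnan, _ | _, FPnan => false
  | FPinf true, _ => true
  | _, FPinf false => true
  | FPinf false, _ => false
  | _, FPinf true => false
  | FPfin a, FPfin b => a <= b
  end.

Definition fp_better (maximize : bool) (u v : fpval) : bool :=
  if maximize then fp_le v u else fp_le u v.

Definition agrees_prefix (x : seq bool) (tau : seq bool) : Prop :=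
  take (size tau) x = tau.

Definition is_dyn_attractor (e s : nat) (maximize : bool) (tau : seq bool)
    (d : (e + s).-tuple bool) : Prop :=
  [/\ ~~ is_nan (fp_value e s d), agrees_prefix d tau &
      forall y : (e + s).-tuple bool, ~~ is_nan (fp_value e s y) ->
        agrees_prefix y tau -> fp_better maximize (fp_value e s d) (fp_value e s y)].

From mathcomp Require Import all_boot all_order all_algebra.
From mathcomp Require Import zify ring.
Import Order.TTheory GRing.Theory Num.Theory.

(* A non-NaN bit vector x denotes the same value as its integer key
   (-1)^x[0] * N(x), where N(x) reads bits 1..n-1 (exponent, then significand)
   as an unsigned integer: the magnitude of a float is a strictly increasing
   function of N, the infinities have the largest admissible N and both zeros
   have key 0. So the floating-point order is the integer order on keys.
   Once the sign is fixed (k > 0), N is compared lexicographically, so bit k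
   splits the non-NaN vectors extending tau_k into two blocks, one strictly
   below the other. Being optimal, the attractor lies in the better block, and
   every model following d[k] beats every model that does not. For k = 0 the
   attractor is -oo (+oo when maximizing), so d[0] is the sign all of whose
   values lie on the better side of 0. *)

Lemma foldl_bits_to_nat a q :
  foldl (fun acc (b : bool) => acc.*2 + b) a q = a * 2 ^ size q + bits_to_nat q.
Proof.
elim: q a => [|b q IHq] a; first by rewrite muln1 addn0.
by rewrite /bits_to_nat /= !IHq expnS; case: b => /=; lia.
Qed.

Lemma bits_to_nat_cat p q :
  bits_to_nat (p ++ q) = bits_to_nat p * 2 ^ size q + bits_to_nat q.
Proof. by rewrite {1}/bits_to_nat foldl_cat foldl_bits_to_nat. Qed.

Lemma bits_to_nat_cons b q : bits_to_nat (b :: q) = b * 2 ^ size q + bits_to_nat q.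
Proof. exact: (bits_to_nat_cat [:: b]). Qed.

Lemma bits_to_nat_lt q : bits_to_nat q < 2 ^ size q.
Proof. by elim: q => [|b q IHq] //; rewrite bits_to_nat_cons /= expnS; case: b; lia. Qed.

Lemma bits_to_nat_nseq b n : bits_to_nat (nseq n b) = if b then (2 ^ n).-1 else 0.
Proof.
elim: n => [|n IHn]; first by case: b.
rewrite bits_to_nat_cons size_nseq IHn expnS; have := expn_gt0 2 n; case: (b); lia.
Qed.

Lemma bits_to_nat_lex u v j : size u = size v -> j < size u -> take j u = take j v ->
  nth false u j = false -> nth false v j = true -> bits_to_nat u < bits_to_nat v.
Proof.
move=> suv ju tuv uj vj.
rewrite -(cat_take_drop j u) -(cat_take_drop j v) tuv !bits_to_nat_cat !size_drop suv.
rewrite ltn_add2l (drop_nth false ju) (drop_nth false (n := j)) -?suv //.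
rewrite uj vj !bits_to_nat_cons mul0n mul1n add0n.
by have := bits_to_nat_lt (drop j.+1 u); rewrite !size_drop suv; lia.
Qed.

Definition fp_mag (x : seq bool) : nat := bits_to_nat (drop 1 x).

Definition fp_key (x : seq bool) : int := (-1) ^+ nth false x 0 * (fp_mag x)%:Z.

Section FloatingPointKey.

Variables e s : nat.
Hypotheses (e_gt0 : 0 < e) (s_gt0 : 0 < s).

Local Notation P := (2 ^ s.-1).

(* The magnitude of a finite value in units of the least subnormal [fp_ulp]:
   [m] for a subnormal, [2^(E-1) * (2^(s-1) + m)] for a normal. *)
Definition fp_units (n : nat) : nat :=
  if n %/ P == 0 then n else 2 ^ (n %/ P).-1 * (P + n %% P).

Definition fp_signed_units (z : int) : int :=
  match z with Posz n => fp_units n | Negz n => - (fp_units n.+1)%:Z end.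

Definition fp_ulp : rat := (2%:R : rat) ^ (1 - ((2 ^ e.-1)%:Z - 1)) / P%:R.

Definition fp_inf_mag : nat := (2 ^ e).-1 * P.

Definition fp_of_key (z : int) : fpval :=
  if `|z| < fp_inf_mag then FPfin (fp_ulp * (fp_signed_units z)%:~R)
  else if `|z|%N == fp_inf_mag then FPinf (z < 0)%R else FPnan.

Lemma fp_units_lt_pow n : fp_units n < 2 ^ (n %/ P) * P.
Proof.
have P_gt0 : 0 < P by rewrite expn_gt0.
rewrite /fp_units; case: eqP => [E0|/eqP E0].
  by rewrite E0 expn0 -(ltn_divLR _ _ P_gt0) E0.
have E_gt0 : 0 < n %/ P by rewrite lt0n.
rewrite -{2}(prednK E_gt0) expnS (mulnC 2) -mulnA ltn_pmul2l ?expn_gt0 //.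
by have := ltn_pmod n P_gt0; lia.
Qed.

Lemma fp_units_mono : {homo fp_units : m n / m < n}.
Proof.
have P_gt0 : 0 < P by rewrite expn_gt0.
move=> m n lt_mn; have := leq_div2r P (ltnW lt_mn).
rewrite leq_eqVlt => /orP[/eqP eqE | ltE].
  rewrite /fp_units eqE; case: ifP => // _.
  rewrite ltn_pmul2l ?expn_gt0 // ltn_add2l.
  by move: (divn_eq m P) (divn_eq n P); rewrite eqE; lia.
apply: (leq_trans (fp_units_lt_pow m)).
have E_gt0 : 0 < n %/ P := leq_ltn_trans (leq0n _) ltE.
rewrite /fp_units ifN -?lt0n // leq_mul ?leq_addr // leq_pexp2l // -ltnS prednK //.
Qed.

Lemma fp_units0 : fp_units 0 = 0.
Proof. by rewrite /fp_units div0n. Qed.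

Lemma fp_signed_units_mono : {homo fp_signed_units : z w / (z < w)%R}.
Proof.
have units_gt0 n : 0 < fp_units n.+1.
  by rewrite -fp_units0; apply: fp_units_mono.
move=> [m|m] [n|n] /= lt_zw.
- by rewrite ltz_nat fp_units_mono // -ltz_nat.
- by move: lt_zw; rewrite NegzE; lia.
- by have := units_gt0 m; lia.
- have lt_nm : n < m by move: lt_zw; rewrite !NegzE; lia.
  have : fp_units n.+1 < fp_units m.+1 by apply: fp_units_mono.
  lia.
Qed.

Lemma fp_signed_unitsMsign (sg : bool) n :
  fp_signed_units ((-1) ^+ sg * n%:Z)%R = ((-1) ^+ sg * (fp_units n)%:Z)%R.
Proof.
case: sg n => [[|n]|n]; rewrite ?expr1 ?mulN1r ?mul1r //.
by rewrite oppr0 /= fp_units0.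
Qed.

Lemma fp_inf_mag_gt0 : 0 < fp_inf_mag.
Proof.
rewrite /fp_inf_mag muln_gt0 expn_gt0 andbT.
by have := leq_pexp2l (isT : 0 < 2) e_gt0; lia.
Qed.

Lemma fp_ulp_gt0 : (0 < fp_ulp)%R.
Proof. by rewrite /fp_ulp divr_gt0 ?exprz_gt0 ?ltr0n ?expn_gt0. Qed.

Lemma fp_le_of_key z w : ~~ is_nan (fp_of_key z) -> ~~ is_nan (fp_of_key w) ->
  fp_le (fp_of_key z) (fp_of_key w) = (z <= w)%R.
Proof.
rewrite /fp_of_key; case: ltnP => [z_fin | z_inf]; case: ltnP => [w_fin | w_inf] /=.
- by rewrite ler_pM2l ?fp_ulp_gt0 // ler_int (le_mono fp_signed_units_mono).
all: do ![case: eqP => //] => *.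
all: have [?|?] := ltP z 0%R; have [?|?] := ltP w 0%R; have [?|?] := leP z w => //=; lia.
Qed.

Lemma fp_mag_fields x : size x = e + s ->
  fp_mag x = bits_to_nat (take e (drop 1 x)) * P + bits_to_nat (drop e.+1 x).
Proof.
move=> size_x; rewrite /fp_mag -[in LHS](cat_take_drop e (drop 1 x)) bits_to_nat_cat.
by rewrite drop_drop addn1 size_drop size_x (_ : e + s - e.+1 = s.-1) //; lia.
Qed.

Lemma fp_significand_lt x : size x = e + s -> bits_to_nat (drop e.+1 x) < P.
Proof.
move=> size_x; have <- : size (drop e.+1 x) = s.-1 by rewrite size_drop size_x; lia.
exact: bits_to_nat_lt.
Qed.

Lemma fp_exponent_lt x : size x = e + s -> bits_to_nat (take e (drop 1 x)) < 2 ^ e.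
Proof.
move=> size_x; rewrite -[in X in _ < X](@size_takel e _ (drop 1 x)) ?bits_to_nat_lt //.
by rewrite size_drop size_x; lia.
Qed.

Lemma fp_valueE x : size x = e + s -> fp_value e s x = fp_of_key (fp_key x).
Proof.
move=> size_x; have P_gt0 : 0 < P by rewrite expn_gt0.
set E := bits_to_nat (take e (drop 1 x)); set m := bits_to_nat (drop e.+1 x).
have magE : fp_mag x = E * P + m := fp_mag_fields x size_x.
have E_lt : E < 2 ^ e := fp_exponent_lt x size_x.
have m_lt : m < P := fp_significand_lt x size_x.
have divE : fp_mag x %/ P = E by rewrite magE divnMDl // divn_small // addn0.
have modE : fp_mag x %% P = m by rewrite magE modnMDl modn_small.
rewrite /fp_value /fp_of_key /fp_inf_mag abszMsign -/E -/m /= -(ltn_divLR _ _ P_gt0) divE.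
case: eqP => [E_inf | /eqP E_fin].
  rewrite E_inf ltnn magE E_inf -[X in _ + m == X]addn0 eqn_add2l.
  case: eqP => // m0; congr FPinf.
  have := fp_inf_mag_gt0.
  rewrite /fp_inf_mag /fp_key magE E_inf m0 addn0.
  by case: (nth false x 0); rewrite ?mul1r ?mulN1r; lia.
have -> /= : E < (2 ^ e).-1 by lia.
rewrite /fp_key fp_signed_unitsMsign /fp_units divE modE /fp_ulp.
have P_neq0 : (P%:R : rat) != 0%R by rewrite pnatr_eq0 -lt0n.
case: eqP => [E0 | /eqP E_pos]; congr FPfin; rewrite intrM intr_sign.
  by rewrite magE E0 mul0n add0n; field.
have expE : (E%:Z - ((2 ^ e.-1)%:Z - 1) = 1 - ((2 ^ e.-1)%:Z - 1) + (E.-1)%:Z)%R.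
  by rewrite -[in LHS](prednK (_ : 0 < E)) ?lt0n // -addn1 PoszD; ring.
rewrite expE expfzDr // -exprnP -pmulrn natrM natrD (natrX _ 2 E.-1).
by field.
Qed.

Lemma fp_le_key x y : size x = e + s -> size y = e + s ->
  ~~ is_nan (fp_value e s x) -> ~~ is_nan (fp_value e s y) ->
  fp_le (fp_value e s x) (fp_value e s y) = (fp_key x <= fp_key y)%R.
Proof. by move=> size_x size_y; rewrite !fp_valueE //; apply: fp_le_of_key. Qed.

End FloatingPointKey.

Lemma nth0_eq_take {k : nat} {x y : seq bool} :
  0 < k -> take k x = take k y -> nth false x 0 = nth false y 0.
Proof. by move=> k_gt0 txy; rewrite -(nth_take _ k_gt0) txy nth_take. Qed.

Lemma fp_mag_lt_bit {k : nat} {x y : seq bool} :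
  0 < k -> size x = size y -> k < size x -> take k x = take k y ->
  nth false x k = false -> nth false y k = true -> fp_mag x < fp_mag y.
Proof.
move=> k_gt0 sxy kx txy xk yk; apply: (bits_to_nat_lex _ _ k.-1).
- by rewrite !size_drop sxy.
- by rewrite size_drop; lia.
- by rewrite !take_drop addn1 prednK // txy.
- by rewrite nth_drop add1n prednK.
- by rewrite nth_drop add1n prednK.
Qed.

Definition fp_rank (maximize : bool) (x : seq bool) : int :=
  ((-1) ^+ maximize * fp_key x)%R.

Lemma fp_rankE m x :
  fp_rank m x = ((-1) ^+ (m (+) nth false x 0) * (fp_mag x)%:Z)%R.
Proof. by rewrite /fp_rank /fp_key signr_addb mulrA. Qed.

Lemma fp_better_rank {e s : nat} {m : bool} {x y : seq bool} :
  0 < e -> 0 < s -> size x = e + s -> size y = e + s ->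
  ~~ is_nan (fp_value e s x) -> ~~ is_nan (fp_value e s y) ->
  fp_better m (fp_value e s x) (fp_value e s y) = (fp_rank m x <= fp_rank m y)%R.
Proof.
move=> e_gt0 s_gt0 size_x size_y x_ok y_ok; rewrite /fp_better /fp_rank.
by case: m; rewrite fp_le_key // ?expr1 ?mulN1r ?lerN2 ?mul1r.
Qed.

Lemma fp_rank_lt_bit {m : bool} {k : nat} {x y : seq bool} :
  0 < k -> size x = size y -> k < size x -> take k x = take k y ->
  nth false x k = m (+) nth false x 0 -> nth false y k = ~~ nth false x k ->
  (fp_rank m x < fp_rank m y)%R.
Proof.
move=> k_gt0 sxy kx txy xk yk; rewrite !fp_rankE -(nth0_eq_take k_gt0 txy).
case: (m (+) _) xk yk => /= xk yk; rewrite ?expr1 ?expr0 ?mulN1r ?mul1r.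
  by rewrite ltrN2 ltz_nat (fp_mag_lt_bit k_gt0) -?sxy -?txy ?yk ?xk.
by rewrite ltz_nat (fp_mag_lt_bit k_gt0) ?yk ?xk.
Qed.

Lemma fp_value_inf_pattern e s sg :
  fp_value e s (sg :: nseq e true ++ nseq s.-1 false) = FPinf sg.
Proof.
rewrite /fp_value /= drop0 take_size_cat ?size_nseq // drop_size_cat ?size_nseq //.
by rewrite !bits_to_nat_nseq eqxx.
Qed.

Lemma fp_value_inf_sign e s x sg : fp_value e s x = FPinf sg -> nth false x 0 = sg.
Proof. by rewrite /fp_value; do 2!case: ifP => // _; case. Qed.

Lemma fp_better_opp_inf m u : fp_better m u (FPinf (~~ m)) -> u = FPinf (~~ m).
Proof. by case: m; case: u => [||] // []. Qed.

Lemma agrees_prefix_rcons x tau c : size tau < size x ->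
  agrees_prefix x (rcons tau c) <-> agrees_prefix x tau /\ nth false x (size tau) = c.
Proof.
rewrite /agrees_prefix size_rcons => tau_lt; rewrite (take_nth false tau_lt).
by split=> [/eqP | [-> ->]] //; rewrite eqseq_rcons => /andP[/eqP -> /eqP ->].
Qed.

Section DynamicAttractor.

Context {e s : nat} {m : bool}.
Hypotheses (e_gt0 : 0 < e) (s_gt0 : 0 < s).

Lemma dyn_attractor_nil_sign (d : (e + s).-tuple bool) :
  is_dyn_attractor e s m [::] d -> nth false d 0 = ~~ m.
Proof.
case=> _ _ d_best.
have size_inf : size (~~ m :: nseq e true ++ nseq s.-1 false) == e + s.
  by rewrite /= size_cat !size_nseq; apply/eqP; lia.
have := d_best (Tuple size_inf); rewrite /= fp_value_inf_pattern.
by move=> /(_ isT (take0 _)) /fp_better_opp_inf /fp_value_inf_sign.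
Qed.

Lemma dyn_attractor_bit {k : nat} {tau : seq bool} {d y : (e + s).-tuple bool} :
  size tau = k -> 0 < k -> k < e + s -> is_dyn_attractor e s m tau d ->
  ~~ is_nan (fp_value e s y) -> agrees_prefix y tau -> nth false y k = ~~ nth false d k ->
  nth false d k = m (+) nth false d 0.
Proof.
move=> <- k_gt0 k_lt [d_ok d_tau d_best] y_ok y_tau y_k.
have d_y0 : nth false d 0 = nth false y 0.
  by apply: (nth0_eq_take k_gt0); rewrite d_tau y_tau.
apply/eqP/negPn/negP => d_k.
suff : (fp_rank m y < fp_rank m d)%R.
  by rewrite ltNge -(fp_better_rank e_gt0 s_gt0) ?size_tuple ?d_best.
apply: (fp_rank_lt_bit k_gt0); rewrite ?size_tuple ?d_tau ?y_tau //.
  by move: d_k; rewrite y_k -d_y0; case: (nth _ d _); case: (_ (+) _).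
by rewrite y_k negbK.
Qed.

End DynamicAttractor.

Theorem lemma1 (e s : nat) (He : (1 < e)%N) (Hs : (1 < s)%N) (maximize : bool)
    (Model : Type) (phi : Model -> Prop) (cost : Model -> (e + s).-tuple bool)
    (Hsat : exists M0, phi M0 /\ ~~ is_nan (fp_value e s (cost M0)))
    (k : nat) (Hk : (k < e + s)%N) (tau : k.-tuple bool) (d : (e + s).-tuple bool)
    (Hd : is_dyn_attractor e s maximize tau d) (M M' : Model)
    (HM : [/\ phi M, ~~ is_nan (fp_value e s (cost M)) &
              agrees_prefix (cost M) (rcons tau (nth false d k))])
    (HM' : [/\ phi M', ~~ is_nan (fp_value e s (cost M')) &
              agrees_prefix (cost M') (rcons tau (~~ nth false d k))]) :
  fp_better maximize (fp_value e s (cost M)) (fp_value e s (cost M')).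
Proof.
have e_gt0 : 0 < e by lia.
have s_gt0 : 0 < s by lia.
have size_tau : size tau = k := size_tuple tau.
case: HM HM' => _ a_ok a_pre [_ b_ok b_pre].
set a := cost M in a_ok a_pre *; set b := cost M' in b_ok b_pre *.
move: a_pre b_pre; rewrite !agrees_prefix_rcons ?size_tau ?size_tuple //.
move=> [a_tau a_k] [b_tau b_k]; rewrite fp_better_rank ?size_tuple //.
case: (posnP k) => [k0 | k_gt0].
  have d0 : nth false d 0 = ~~ maximize.
    by apply: dyn_attractor_nil_sign => //; rewrite -(size0nil (etrans size_tau k0)).
  rewrite !fp_rankE -k0 a_k b_k k0 d0 negbK addbN addbb expr1 expr0 mulN1r mul1r; lia.
have d_k := dyn_attractor_bit e_gt0 s_gt0 size_tau k_gt0 Hk Hd b_ok b_tau b_k.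
case: Hd => _ d_tau _; rewrite /agrees_prefix size_tau in a_tau b_tau d_tau.
have a_d0 := nth0_eq_take k_gt0 (etrans a_tau (esym d_tau)).
apply/ltW/(fp_rank_lt_bit k_gt0); rewrite ?size_tuple ?a_tau ?b_tau //.
  by rewrite a_k d_k a_d0.
by rewrite a_k b_k.
Qed.
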